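(* Let $f:[0,1]\to\mathbb{R}$ with $f(0),f(1)\in\mathbb{Z}$, and let $n\in\mathbb{N}_+$, $n\ge 3$. Set \[ \phi_n(x):=(n+1)\int_0^1 t(1-t)^{n(1-x)}\frac{(1-t)^{nx}-t^{nx}}{1-2t}\,dt,\quad x\in[0,1]. \] If $f(x)-\phi_n(x)$ is monotone increasing on $[0,1]$, then $\widetilde{B}_n(f)$ is monotone increasing on $[0,1]$.
   Context: For $n\in\mathbb{N}_+$ and $f:[0,1]\to\mathbb{R}$, $\widetilde{B}_n(f)(x):=\sum_{k=0}^n \left[f\left(\frac{k}{n}\right)\binom{n}{k}\right]x^k(1-x)^{n-k}$, where $[\alpha]$ is the largest integer $\le\alpha$. Monotone increasing is meant in the non-strict sense. *)

From HB Require Import structures.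
From mathcomp Require Import all_boot all_order all_algebra.
From mathcomp Require Import all_classical all_reals all_analysis.
Set Implicit Arguments. Unset Strict Implicit. Unset Printing Implicit Defensive.
Import Order.TTheory GRing.Theory Num.Theory.
Local Open Scope ring_scope.
Local Open Scope classical_set_scope.

Definition floorBernstein (R : realType) (n : nat) (f : R -> R) (x : R) : R :=
  \sum_(0 <= k < n.+1)
     (Num.floor (f (k%:R / n%:R) * ('C(n, k))%:R))%:~R
       * x ^+ k * (1 - x) ^+ (n - k).

(* phi_n(x) = (n+1) * int_0^1 t (1-t)^(n(1-x)) ((1-t)^(nx) - t^(nx)) / (1-2t) dt
   (Lebesgue integral; the integrand has a removable singularity at t=1/2,
   a null set; real powers are powR). *)
Definition phi (R : realType) (n : nat) (x : R) : R :=
  n.+1%:R *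
  \int[@lebesgue_measure R]_(t in `[0%R, 1%R])
     (t * (1 - t) `^ (n%:R * (1 - x))
        * (((1 - t) `^ (n%:R * x) - t `^ (n%:R * x)) / (1 - 2 * t))).

From HB Require Import structures.
From mathcomp Require Import all_boot all_order all_algebra.
From mathcomp Require Import all_classical all_reals all_analysis.
From mathcomp Require Import ring lra.
Set Implicit Arguments. Unset Strict Implicit. Unset Printing Implicit Defensive.
Import Order.TTheory GRing.Theory Num.Theory.
Local Open Scope ring_scope.

(* Idea: the floor-Bernstein polynomial is the Bernstein polynomial with
   coefficients c_k = [f(k/n) C(n,k)] / C(n,k), and a Bernstein polynomial is
   nondecreasing on [0,1] as soon as its coefficient sequence is.  At the nodes
   x = k/n the integrand of phi_n is the polynomial
   sum_(i<k) t^(i+1) (1-t)^(n-i-1), so the Beta integral gives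
   phi_n((k+1)/n) - phi_n(k/n) = 1/C(n,k+1).  Monotonicity of f - phi_n thus
   yields f((k+1)/n) >= f(k/n) + 1/C(n,k+1), and this margin absorbs the loss
   caused by the floor: c_k <= f(k/n) and c_(k+1) > f((k+1)/n) - 1/C(n,k+1). *)

Definition bernstein (R : comNzRingType) (n : nat) (c : nat -> R) (x : R) : R :=
  \sum_(k < n.+1) c k * ('C(n, k))%:R * x ^+ k * (1 - x) ^+ (n - k).

Lemma bernsteinS (R : comNzRingType) n (c : nat -> R) x :
  bernstein n.+1 c x =
  (1 - x) * bernstein n c x + x * bernstein n (fun k => c k.+1) x.
Proof.
rewrite /bernstein big_ord_recl /= [in RHS]big_ord_recl /=.
under eq_bigr => i _ do rewrite /bump /= add1n binS natrD !mulrDr mulrDl mulrDl.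
rewrite big_split /= big_ord_recr /= (bin_small (ltnSn n)) mulr0 !mul0r addr0.
rewrite mulrDr !mulr_sumr !bin0 !subn0 addrA.
congr (_ + _ + _); first by rewrite !exprS; ring.
- apply: eq_bigr => i _; rewrite /bump /= add1n subSS -(subnSK (ltn_ord i)).
  by rewrite !exprS; ring.
- by apply: eq_bigr => i _; rewrite subSS !exprS; ring.
Qed.

Lemma ler_bernstein (R : realDomainType) n (c d : nat -> R) x :
  x \in `[0, 1] -> (forall k, (k <= n)%N -> c k <= d k) ->
  bernstein n c x <= bernstein n d x.
Proof.
rewrite in_itv /= => /andP[x0 x1] cd; apply: ler_sum => k _.
rewrite -!mulrA ler_wpM2r ?mulr_ge0 ?exprn_ge0 ?subr_ge0 // cd //.
by rewrite -ltnS.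
Qed.

Lemma bernstein_homo (R : realFieldType) n (c : nat -> R) :
  (forall k, (k < n)%N -> c k <= c k.+1) ->
  {in `[0, 1] &, {homo bernstein n c : x y / x <= y}}.
Proof.
elim: n c => [|n IH] c cS x y x01 y01 xy; first by rewrite /bernstein !big_ord1.
move: (y01); rewrite in_itv /= => /andP[y0 y1].
rewrite !bernsteinS.
set B := bernstein n c; set B' := bernstein n (fun k => c k.+1).
have Bxy : B x <= B y by apply: IH => // k kn; apply: cS; apply: ltnW.
have B'xy : B' x <= B' y by apply: IH => // k kn; apply: cS.
have BB' : B x <= B' x by apply: ler_bernstein => // k kn; apply: cS.
have : (1 - y) * B x + y * B' x <= (1 - y) * B y + y * B' y.
  by apply: lerD; apply: ler_wpM2l; rewrite ?subr_ge0.
(* moving the weight from x to y can only favour the larger value B' x *)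
have : 0 <= (y - x) * (B' x - B x) by apply: mulr_ge0; rewrite subr_ge0.
lra.
Qed.

Lemma floor_div_lt (R : archiRealFieldType) (a b p q : R) : 0 < p -> 0 < q ->
  a + q^-1 <= b -> (Num.floor (a * p))%:~R / p < (Num.floor (b * q))%:~R / q.
Proof.
move=> p0 q0 ab.
have lea : (Num.floor (a * p))%:~R / p <= a by rewrite ler_pdivrMr // floor_le.
have ltb : b - q^-1 < (Num.floor (b * q))%:~R / q.
  by rewrite ltr_pdivlMr // mulrBl mulVf ?gt_eqF // ltrBlDr -intrD1 floorD1_gt.
lra.
Qed.

Section phi_at_nodes.
Variable R : realType.
Notation mu := (@lebesgue_measure R).
Implicit Types (n k : nat) (t : R).

Lemma Rintegral_XMonemX a b :
  \int[mu]_(t in `[0, 1]) XMonemX a b t = (a`! * b`!)%:R / (a + b).+1`!%:R.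
Proof. by rewrite Rintegral_mkcond -beta_fun_fact. Qed.

(* the integrand of phi n at x = k/n, see phi_integrand_nat *)
Definition phi_kernel n k t : R := \sum_(i < k) XMonemX i.+1 (n - i.+1) t.

Lemma phi_kernelS n k t :
  phi_kernel n k.+1 t = phi_kernel n k t + XMonemX k.+1 (n - k.+1) t.
Proof. by rewrite /phi_kernel big_ord_recr. Qed.

Lemma phi_kernelM n k t : (k <= n)%N ->
  phi_kernel n k t * (1 - 2 * t) = t * (1 - t) ^+ (n - k) * ((1 - t) ^+ k - t ^+ k).
Proof.
elim: k => [|k IH] kn; first by rewrite /phi_kernel big_ord0 mul0r !expr0 subrr mulr0.
rewrite phi_kernelS mulrDl (IH (ltnW kn)) /XMonemX -(subnSK kn).
by rewrite !exprS; ring.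
Qed.

Lemma integrable_phi_kernel n k : mu.-integrable `[0, 1] (EFin \o phi_kernel n k).
Proof.
elim: k => [|k IH].
  apply: eq_integrable (integrable0 _ _) => //= t _.
  by rewrite /phi_kernel big_ord0.
apply: eq_integrable (integrableD _ IH (integrable_XMonemX k.+1 (n - k.+1))) => //.
by move=> t _; rewrite /= phi_kernelS.
Qed.

Lemma phi_integrand_nat n k t : (0 < n)%N -> (k <= n)%N ->
  t \in `[0, 1] -> t != 2^-1 ->
  t * (1 - t) `^ (n%:R * (1 - k%:R / n%:R))
    * (((1 - t) `^ (n%:R * (k%:R / n%:R)) - t `^ (n%:R * (k%:R / n%:R)))
       / (1 - 2 * t))
  = phi_kernel n k t.
Proof.
rewrite in_itv /= => n0 kn /andP[t0 t1] th.
have nk : n%:R * (k%:R / n%:R) = k%:R :> R by rewrite mulrCA divff ?mulr1 ?pnatr_eq0 -?lt0n.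
have nnk : n%:R * (1 - k%:R / n%:R) = (n - k)%:R :> R by rewrite mulrBr mulr1 nk natrB.
have t2 : 1 - 2 * t != 0 by apply: contraNneq th => ?; apply/eqP; lra.
rewrite nk nnk !powR_mulrn ?subr_ge0 //.
by rewrite -(mulfK t2 (phi_kernel n k t)) phi_kernelM // mulrA.
Qed.

Lemma phi_nat n k : (0 < n)%N -> (k <= n)%N ->
  phi n (k%:R / n%:R) = n.+1%:R * \int[mu]_(t in `[0, 1]) phi_kernel n k t.
Proof.
move=> n0 kn; rewrite /phi /Rintegral; congr (_ * fine _).
have mD : measurable (`[0%R, 1%R] `\ (2^-1 : R))%classic by apply: measurableD.
have mK := measurable_funS (D := (`[0%R, 1%R] `\ (2^-1 : R))%classic)
  (measurable_itv _) (@subDsetl _ _ _)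
  (measurable_int _ (integrable_phi_kernel n k)).
have onD (t : R) : (`[0, 1] `\ 2^-1)%classic t -> t \in `[0, 1] /\ t != 2^-1.
  by move=> [t01 /eqP t2]; split => //; apply/mem_set.
(* the integrands differ only at t = 1/2, a null set *)
rewrite -!(integral_setD1 mD) //.
  by apply: eq_integral => t /set_mem /onD[t01 t2]; rewrite phi_integrand_nat.
apply: eq_measurable_fun mK => t /set_mem /onD[t01 t2].
by rewrite /= phi_integrand_nat.
Qed.

Lemma phi_natS n k : (k < n)%N ->
  phi n (k.+1%:R / n%:R) - phi n (k%:R / n%:R) = ('C(n, k.+1))%:R^-1 :> R.
Proof.
move=> kn; have n0 : (0 < n)%N by apply: leq_ltn_trans kn.
rewrite !phi_nat ?(ltnW kn) // -mulrBr.
have -> : \int[mu]_(t in `[0, 1]) phi_kernel n k.+1 t =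
    \int[mu]_(t in `[0, 1]) phi_kernel n k t
  + \int[mu]_(t in `[0, 1]) XMonemX k.+1 (n - k.+1) t.
  rewrite -RintegralD ?integrable_phi_kernel ?integrable_XMonemX //.
  by apply: eq_Rintegral => t _; rewrite phi_kernelS.
rewrite addrC addKr Rintegral_XMonemX subnKC // [n.+1`!]factS -(bin_fact kn).
have C0 : (0 < 'C(n, k.+1))%N by rewrite bin_gt0.
move: C0 (fact_gt0 k.+1) (fact_gt0 (n - k.+1)).
move: 'C(n, k.+1) k.+1`! (n - k.+1)`! => C a b C0 a0 b0.
rewrite !natrM; field.
by rewrite addrC natr1 !pnatr_eq0 -!lt0n C0 a0 b0.
Qed.

End phi_at_nodes.

Lemma floorBernsteinE (R : realType) n (f : R -> R) :
  floorBernstein n f =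
  bernstein n (fun k => (Num.floor (f (k%:R / n%:R) * ('C(n, k))%:R))%:~R / ('C(n, k))%:R).
Proof.
apply/funext => x; rewrite /floorBernstein /bernstein big_mkord.
apply: eq_bigr => k _; rewrite divfK // pnatr_eq0 -lt0n bin_gt0.
by rewrite -ltnS.
Qed.

Lemma natr_div_itv01 (R : realFieldType) n k : (0 < n)%N -> (k <= n)%N ->
  k%:R / n%:R \in `[0, 1 : R].
Proof.
by move=> n0 kn; rewrite in_itv /= divr_ge0 // ler_pdivrMr ?ltr0n // mul1r ler_nat.
Qed.

Theorem corollary2p3 (R : realType) (f : R -> R) (n : nat) :
  f 0 \is a Num.int -> f 1 \is a Num.int -> (3 <= n)%N ->
  {in `[0, 1] &, {homo (fun x => f x - phi n x) : x y / x <= y}} ->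
  {in `[0, 1] &, {homo floorBernstein n f : x y / x <= y}}.
Proof.
move=> _ _ n3 f_phi_homo; have n0 : (0 < n)%N by apply: leq_trans n3.
rewrite floorBernsteinE; apply: bernstein_homo => k kn.
apply/ltW/floor_div_lt; rewrite ?ltr0n ?bin_gt0 ?(ltnW kn) //.
have k_le_kS : k%:R / n%:R <= k.+1%:R / n%:R :> R.
  by rewrite ler_pM2r ?invr_gt0 ?ltr0n // ler_nat.
have := f_phi_homo _ _ (natr_div_itv01 R n0 (ltnW kn)) (natr_div_itv01 R n0 kn) k_le_kS.
rewrite /= -(phi_natS R kn); lra.
Qed.
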